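(* In the twisted Heisenberg category $\mathcal{H}^t$ (defined in the context), for $n\ge 2$ the following relations hold in the algebra $\mathrm{End}(P^n)$, for all admissible $i,j$: $T_iX_i = X_{i+1}T_i + 1 + C_iC_{i+1}$, $\;X_iT_i = T_iX_{i+1} + 1 - C_iC_{i+1}$, $\;C_iX_j = (-1)^{\delta_{i,j}}X_jC_i$, $\;X_iX_j = X_jX_i$.
   Context: $\Bbbk$ is a field of characteristic $0$. $\mathcal{H}^t$ is the $\Bbbk$-linear $\mathbb{Z}/2\mathbb{Z}$-graded (super) monoidal category obtained as the idempotent completion (with finite direct sums and parity shifts) of the monoidal category generated by objects $P, Q$ (unit object $\mathbf 1$) and morphisms: an even upward crossing $s: PP\to PP$; even cups/caps $\eta:\mathbf 1\to QP$, $\varepsilon: QP\to\mathbf 1$, $\eta':\mathbf 1\to PQ$, $\varepsilon':PQ\to\mathbf 1$; and odd ''hollow dots'' $c_P:P\to P\{1\}$, $c_Q:Q\to Q\{1\}$. Morphisms are planar string diagrams ($P$ upward strand, $Q$ downward strand, composition read bottom to top); diagrams differing by planar isotopy are equal, and odd dots on different strands supercommute (interchanging heights of two dots on different strands gives a sign $-1$). Let $\sigma=(\varepsilon\otimes 1_{PQ})(1_Q\otimes s\otimes 1_Q)(1_{QP}\otimes\eta'):QP\to PQ$ and $\sigma'=(1_{QP}\otimes\varepsilon')(1_Q\otimes s\otimes 1_Q)(\eta\otimes 1_{PQ}):PQ\to QP$. Defining relations: $s^2=1$, braid relation for $s$ on $PPP$; $\sigma\sigma'=1_{PQ}$, $\sigma'\sigma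 = 1_{QP}-\eta\varepsilon-(c_Q\otimes 1_P)\eta\varepsilon(1_Q\otimes c_P)$; $\varepsilon\eta=1_{\mathbf 1}$, $(\varepsilon\otimes 1_P)(1_Q\otimes s)(\eta\otimes 1_P)=0$; $s(c_P\otimes 1)=(1\otimes c_P)s$, $(c_P\otimes 1)s=s(1\otimes c_P)$; $\varepsilon(c_Q\otimes 1_P)=-\varepsilon(1_Q\otimes c_P)$, $\varepsilon'(c_P\otimes 1_Q)=\varepsilon'(1_P\otimes c_Q)$, $(c_Q\otimes 1_P)\eta=(1_Q\otimes c_P)\eta$, $(c_P\otimes 1_Q)\eta'=-(1_P\otimes c_Q)\eta'$; $c_P^2=1_P$, $c_Q^2=-1_Q$, $\varepsilon(1_Q\otimes c_P)\eta=0$. In $\mathrm{End}(P^n)$ (product = composition), $T_i$ is the crossing $s$ applied to strands $i,i+1$ ($1\le i\le n-1$), $C_i$ is $c_P$ on strand $i$, and $X_i$ is the ''right curl'' $X=(1_P\otimes\varepsilon')(s\otimes 1_Q)(1_P\otimes\eta'):P\to P$ applied to strand $i$ ($1\le i\le n$); $1$ is the identity of $P^n$ and $\delta_{i,j}$ is the Kronecker delta. *)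

(* A syntactic presentation of the twisted Heisenberg
   category H^t (before idempotent completion, which does not change
   End(P^n)): morphisms are formal terms built from the generators by
   composition, tensor product and linear combinations; equality of
   morphisms is the smallest typed congruence [heq] containing the axioms
   of a strict monoidal k-linear supercategory (super interchange law),
   planar isotopy (zigzags + cyclicity of the crossing) and the defining
   relations of the context. *)
From mathcomp Require Import all_boot all_order all_algebra.
Set Implicit Arguments.
Unset Strict Implicit.
Unset Printing Implicit Defensive.
Import GRing.Theory.
Local Open Scope ring_scope.

(* Objects: words in P (= true, upward) and Q (= false, downward). *)
Definition obj := seq bool.

Inductive term (k : Type) : Type :=
| tId of obj
| tComp of term k & term k         (* tComp f g = f o g  (g first) *)
| tTens of term k & term k         (* tTens f g = f (x) g  (f on the left) *)
| tZero of obj & obj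
| tAdd of term k & term k
| tScale of k & term k
| tS                               (* upward crossing  PP -> PP, even *)
| tEta
| tEps
| tEta'
| tEps'
| tCP                              (* hollow dot on P, odd *)
| tCQ.                             (* hollow dot on Q, odd *)

Arguments tId {k}. Arguments tZero {k}. Arguments tS {k}. Arguments tEta {k}.
Arguments tEps {k}. Arguments tEta' {k}. Arguments tEps' {k}.
Arguments tCP {k}. Arguments tCQ {k}.

(* htyped a b p f : f is a homogeneous morphism a -> b of parity p. *)
Inductive htyped (k : Type) : obj -> obj -> bool -> term k -> Prop :=
| ty_id a : htyped a a false (tId a)
| ty_comp a b c p q f g :
    htyped b c p f -> htyped a b q g -> htyped a c (p (+) q) (tComp f g)
| ty_tens a b c d p q f g :
    htyped a b p f -> htyped c d q g -> htyped (a ++ c) (b ++ d) (p (+) q) (tTens f g)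
| ty_zero a b p : htyped a b p (tZero a b)
| ty_add a b p f g : htyped a b p f -> htyped a b p g -> htyped a b p (tAdd f g)
| ty_scale a b p (c : k) f : htyped a b p f -> htyped a b p (tScale c f)
| ty_s : htyped [:: true; true] [:: true; true] false tS
| ty_eta : htyped [::] [:: false; true] false tEta
| ty_eps : htyped [:: false; true] [::] false tEps
| ty_eta' : htyped [::] [:: true; false] false tEta'
| ty_eps' : htyped [:: true; false] [::] false tEps'
| ty_cP : htyped [:: true] [:: true] true tCP
| ty_cQ : htyped [:: false] [:: false] true tCQ.

Section Derived.
Variable k : Type.
Definition idP : term k := tId [:: true].
Definition idQ : term k := tId [:: false].
Definition sigma : term k :=
  tComp (tComp (tTens tEps (tId [:: true; false])) (tTens (tTens idQ tS) idQ))
        (tTens (tId [:: false; true]) tEta').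
Definition sigma' : term k :=
  tComp (tComp (tTens (tId [:: false; true]) tEps') (tTens (tTens idQ tS) idQ))
        (tTens tEta (tId [:: true; false])).
Definition Xcurl : term k :=
  tComp (tComp (tTens idP tEps') (tTens tS idQ)) (tTens idP tEta').
Definition etaPP : term k := tComp (tTens (tTens idQ tEta) idP) tEta.
Definition epsPP : term k := tComp tEps (tTens (tTens idQ tEps) idP).
Definition eta'PP : term k := tComp (tTens (tTens idP tEta') idQ) tEta'.
Definition eps'PP : term k := tComp tEps' (tTens (tTens idP tEps') idQ).
Definition idQQ : term k := tId [:: false; false].
(* the two 180-degree rotations of the crossing, QQ -> QQ *)
Definition s_leftmate : term k :=
  tComp (tComp (tTens epsPP idQQ) (tTens (tTens idQQ tS) idQQ)) (tTens idQQ eta'PP).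
Definition s_rightmate : term k :=
  tComp (tComp (tTens idQQ eps'PP) (tTens (tTens idQQ tS) idQQ)) (tTens etaPP idQQ).

(* the strand-local morphisms of End(P^n), indices 1-based *)
Definition Pn (n : nat) : obj := nseq n true.
Definition Ti (n i : nat) : term k :=
  tTens (tTens (tId (nseq i.-1 true)) tS) (tId (nseq (n - i.+1) true)).
Definition Ci (n i : nat) : term k :=
  tTens (tTens (tId (nseq i.-1 true)) tCP) (tId (nseq (n - i) true)).
Definition Xi (n i : nat) : term k :=
  tTens (tTens (tId (nseq i.-1 true)) Xcurl) (tId (nseq (n - i) true)).
End Derived.

Arguments idP {k}. Arguments idQ {k}. Arguments sigma {k}. Arguments sigma' {k}.
Arguments Xcurl {k}. Arguments etaPP {k}. Arguments epsPP {k}.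
Arguments eta'PP {k}. Arguments eps'PP {k}. Arguments idQQ {k}.
Arguments s_leftmate {k}. Arguments s_rightmate {k}.
Arguments Ti {k}. Arguments Ci {k}. Arguments Xi {k}.

Inductive heq (k : fieldType) : obj -> obj -> bool -> term k -> term k -> Prop :=
| heq_refl a b p f : htyped a b p f -> heq a b p f f
| heq_sym a b p f g : heq a b p f g -> heq a b p g f
| heq_trans a b p f g h : heq a b p f g -> heq a b p g h -> heq a b p f h
| heq_comp a b c p q f f' g g' :
    heq b c p f f' -> heq a b q g g' -> heq a c (p (+) q) (tComp f g) (tComp f' g')
| heq_tens a b c d p q f f' g g' :
    heq a b p f f' -> heq c d q g g' ->
    heq (a ++ c) (b ++ d) (p (+) q) (tTens f g) (tTens f' g')
| heq_add a b p f f' g g' :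
    heq a b p f f' -> heq a b p g g' -> heq a b p (tAdd f g) (tAdd f' g')
| heq_scale a b p (c : k) f f' : heq a b p f f' -> heq a b p (tScale c f) (tScale c f')
| heq_addA a b p f g h : htyped a b p f -> htyped a b p g -> htyped a b p h ->
    heq a b p (tAdd f (tAdd g h)) (tAdd (tAdd f g) h)
| heq_addC a b p f g : htyped a b p f -> htyped a b p g ->
    heq a b p (tAdd f g) (tAdd g f)
| heq_add0 a b p f : htyped a b p f -> heq a b p (tAdd f (tZero a b)) f
| heq_scale1 a b p f : htyped a b p f -> heq a b p (tScale 1 f) f
| heq_scaleA a b p (c d : k) f : htyped a b p f ->
    heq a b p (tScale c (tScale d f)) (tScale (c * d) f)
| heq_scaleDl a b p (c d : k) f : htyped a b p f ->
    heq a b p (tScale (c + d) f) (tAdd (tScale c f) (tScale d f))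
| heq_scaleDr a b p (c : k) f g : htyped a b p f -> htyped a b p g ->
    heq a b p (tScale c (tAdd f g)) (tAdd (tScale c f) (tScale c g))
| heq_scale0 a b p f : htyped a b p f -> heq a b p (tScale 0 f) (tZero a b)
| heq_idl a b p f : htyped a b p f -> heq a b p (tComp (tId b) f) f
| heq_idr a b p f : htyped a b p f -> heq a b p (tComp f (tId a)) f
| heq_compA a b c d p q r f g h :
    htyped c d p f -> htyped b c q g -> htyped a b r h ->
    heq a d (p (+) (q (+) r)) (tComp f (tComp g h)) (tComp (tComp f g) h)
| heq_compDl a b c p q f f' g : htyped b c p f -> htyped b c p f' -> htyped a b q g ->
    heq a c (p (+) q) (tComp (tAdd f f') g) (tAdd (tComp f g) (tComp f' g))
| heq_compDr a b c p q f g g' : htyped b c p f -> htyped a b q g -> htyped a b q g' ->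
    heq a c (p (+) q) (tComp f (tAdd g g')) (tAdd (tComp f g) (tComp f g'))
| heq_compZl a b c p q (x : k) f g : htyped b c p f -> htyped a b q g ->
    heq a c (p (+) q) (tComp (tScale x f) g) (tScale x (tComp f g))
| heq_compZr a b c p q (x : k) f g : htyped b c p f -> htyped a b q g ->
    heq a c (p (+) q) (tComp f (tScale x g)) (tScale x (tComp f g))
| heq_comp0l a b c p q g : htyped a b q g ->
    heq a c (p (+) q) (tComp (tZero b c) g) (tZero a c)
| heq_comp0r a b c p q f : htyped b c p f ->
    heq a c (p (+) q) (tComp f (tZero a b)) (tZero a c)
| heq_tensDl a b c d p q f f' g : htyped a b p f -> htyped a b p f' -> htyped c d q g ->
    heq (a ++ c) (b ++ d) (p (+) q) (tTens (tAdd f f') g) (tAdd (tTens f g) (tTens f' g))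
| heq_tensDr a b c d p q f g g' : htyped a b p f -> htyped c d q g -> htyped c d q g' ->
    heq (a ++ c) (b ++ d) (p (+) q) (tTens f (tAdd g g')) (tAdd (tTens f g) (tTens f g'))
| heq_tensZl a b c d p q (x : k) f g : htyped a b p f -> htyped c d q g ->
    heq (a ++ c) (b ++ d) (p (+) q) (tTens (tScale x f) g) (tScale x (tTens f g))
| heq_tensZr a b c d p q (x : k) f g : htyped a b p f -> htyped c d q g ->
    heq (a ++ c) (b ++ d) (p (+) q) (tTens f (tScale x g)) (tScale x (tTens f g))
| heq_tens0l a b c d p q g : htyped c d q g ->
    heq (a ++ c) (b ++ d) (p (+) q) (tTens (tZero a b) g) (tZero (a ++ c) (b ++ d))
| heq_tens0r a b c d p q f : htyped a b p f ->
    heq (a ++ c) (b ++ d) (p (+) q) (tTens f (tZero c d)) (tZero (a ++ c) (b ++ d))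
| heq_tensA a b c d e g p q r f1 f2 f3 :
    htyped a b p f1 -> htyped c d q f2 -> htyped e g r f3 ->
    heq ((a ++ c) ++ e) ((b ++ d) ++ g) (p (+) (q (+) r))
        (tTens (tTens f1 f2) f3) (tTens f1 (tTens f2 f3))
| heq_unitl a b p f : htyped a b p f -> heq a b p (tTens (tId [::]) f) f
| heq_unitr a b p f : htyped a b p f -> heq a b p (tTens f (tId [::])) f
| heq_tens_id a b : heq (a ++ b) (a ++ b) false (tTens (tId a) (tId b)) (tId (a ++ b))
| heq_interchange a b c d e g p q r s f f' h h' :
    htyped b c p f -> htyped e g q f' -> htyped a b r h -> htyped d e s h' ->
    heq (a ++ d) (c ++ g) ((p (+) q) (+) (r (+) s))
        (tComp (tTens f f') (tTens h h'))
        (tScale ((-1) ^+ (q && r)) (tTens (tComp f h) (tComp f' h')))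
| heq_zz1 : heq [:: false] [:: false] false
    (tComp (tTens tEps idQ) (tTens idQ tEta')) idQ
| heq_zz2 : heq [:: true] [:: true] false
    (tComp (tTens idP tEps) (tTens tEta' idP)) idP
| heq_zz3 : heq [:: true] [:: true] false
    (tComp (tTens tEps' idP) (tTens idP tEta)) idP
| heq_zz4 : heq [:: false] [:: false] false
    (tComp (tTens idQ tEps') (tTens tEta idQ)) idQ
| heq_cyc : heq [:: false; false] [:: false; false] false s_leftmate s_rightmate
| heq_s2 : heq [:: true; true] [:: true; true] false (tComp tS tS) (tId [:: true; true])
| heq_braid : heq [:: true; true; true] [:: true; true; true] false
    (tComp (tComp (tTens tS idP) (tTens idP tS)) (tTens tS idP))
    (tComp (tComp (tTens idP tS) (tTens tS idP)) (tTens idP tS))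
| heq_sigma1 : heq [:: true; false] [:: true; false] false
    (tComp sigma sigma') (tId [:: true; false])
| heq_sigma2 : heq [:: false; true] [:: false; true] false
    (tComp sigma' sigma)
    (tAdd (tAdd (tId [:: false; true]) (tScale (-1) (tComp tEta tEps)))
          (tScale (-1) (tComp (tComp (tTens tCQ idP) (tComp tEta tEps)) (tTens idQ tCP))))
| heq_bubble : heq [::] [::] false (tComp tEps tEta) (tId [::])
| heq_curl0 : heq [:: true] [:: true] false
    (tComp (tComp (tTens tEps idP) (tTens idQ tS)) (tTens tEta idP)) (tZero [:: true] [:: true])
| heq_sdot1 : heq [:: true; true] [:: true; true] true
    (tComp tS (tTens tCP idP)) (tComp (tTens idP tCP) tS)
| heq_sdot2 : heq [:: true; true] [:: true; true] true
    (tComp (tTens tCP idP) tS) (tComp tS (tTens idP tCP))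
| heq_dotcap : heq [:: false; true] [::] true
    (tComp tEps (tTens tCQ idP)) (tScale (-1) (tComp tEps (tTens idQ tCP)))
| heq_dotcap' : heq [:: true; false] [::] true
    (tComp tEps' (tTens tCP idQ)) (tComp tEps' (tTens idP tCQ))
| heq_dotcup : heq [::] [:: false; true] true
    (tComp (tTens tCQ idP) tEta) (tComp (tTens idQ tCP) tEta)
| heq_dotcup' : heq [::] [:: true; false] true
    (tComp (tTens tCP idQ) tEta') (tScale (-1) (tComp (tTens idP tCQ) tEta'))
| heq_cP2 : heq [:: true] [:: true] false (tComp tCP tCP) idP
| heq_cQ2 : heq [:: false] [:: false] false (tComp tCQ tCQ) (tScale (-1) idQ)
| heq_dotbubble : heq [::] [::] true
    (tComp (tComp tEps (tTens idQ tCP)) tEta) (tZero [::] [::]).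

(* In End(PP) the right curl X satisfies
     X (x) 1_P = s (1_P (x) X) s + s + s (c (x) 1)(1 (x) c).
   Indeed X (x) 1_P is obtained from s (x) 1_QP by closing strands 2 and 3
   with a cup' below and a cap' above.  Inserting the defining relation
     1_QP = sigma' sigma + eta eps + (c_Q (x) 1) eta eps (1 (x) c_P)
   splits it into three pieces: the sigma' sigma piece becomes s (1 (x) X) s
   after sliding crossings through cups and caps and one braid move, the
   eta eps piece collapses to s by zigzag, and in the dotted piece the dots
   slide off the cup and the cap.  Composing with s = s^-1 on either side
   gives both relations between T_i and X_i, the sign in the second one
   coming from the anticommutation of dots on different strands.  A dot
   anticommutes with X since carrying it around the curl moves it through
   the cup eta', which costs a sign; everything else is the super
   interchange law for morphisms on disjoint strands. *)

From mathcomp Require Import all_boot all_order all_algebra.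
From Stdlib Require Import Setoid Morphisms.
From mathcomp Require Import zify.
Import GRing.Theory.
Local Open Scope ring_scope.

(** * Typed terms up to the relations of H^t *)

Section TypeInference.
Context {k : fieldType}.
Implicit Types f g h : term k.

Fixpoint infer f : option (obj * obj * bool) :=
  match f with
  | tId a => Some (a, a, false)
  | tComp f g =>
      if (infer f, infer g) is (Some (b, c, p), Some (a, b', q)) then
        if b' == b then Some (a, c, p (+) q) else None
      else None
  | tTens f g =>
      if (infer f, infer g) is (Some (a, b, p), Some (c, d, q)) then
        Some (a ++ c, b ++ d, p (+) q)
      else None
  | tZero a b => Some (a, b, false)
  | tAdd f g =>
      if (infer f, infer g) is (Some (a, b, p), Some (a', b', q)) then
        if [&& a == a', b == b' & p == q] then Some (a, b, p) else None
      else None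
  | tScale _ f => infer f
  | tS => Some ([:: true; true], [:: true; true], false)
  | tEta => Some ([::], [:: false; true], false)
  | tEps => Some ([:: false; true], [::], false)
  | tEta' => Some ([::], [:: true; false], false)
  | tEps' => Some ([:: true; false], [::], false)
  | tCP => Some ([:: true], [:: true], true)
  | tCQ => Some ([:: false], [:: false], true)
  end.

Lemma infer_sound f a b p : infer f = Some (a, b, p) -> htyped a b p f.
Proof.
elim: f a b p => [a0|f IHf g IHg|f IHf g IHg|a0 b0|f IHf g IHg|c f IHf| | | | | | |] a b p /=.
- by case=> <- <- <-; constructor.
- case Hf: (infer f) => [[[b1 c1] p1]|] //; case Hg: (infer g) => [[[a1 b2] q1]|] //.
  case: eqP => // ?; subst => -[<- <- <-].
  by apply: ty_comp; [exact: IHf Hf | exact: IHg Hg].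
- case Hf: (infer f) => [[[a1 b1] p1]|] //; case Hg: (infer g) => [[[c1 d1] q1]|] //.
  by case=> <- <- <-; apply: ty_tens; [exact: IHf Hf | exact: IHg Hg].
- by case=> <- <- _; constructor.
- case Hf: (infer f) => [[[a1 b1] p1]|] //; case Hg: (infer g) => [[[a2 b2] q1]|] //.
  do 3 (case: eqP => //= ?; subst); case=> <- <- <-.
  by apply: ty_add; [exact: IHf Hf | exact: IHg Hg].
- by move=> H; apply: ty_scale; exact: IHf H.
all: by case=> <- <- <-; constructor.
Qed.

Lemma infer_comp f g a b c p q : infer f = Some (b, c, p) -> infer g = Some (a, b, q) ->
  infer (tComp f g) = Some (a, c, p (+) q).
Proof. by move=> Hf Hg; rewrite /= Hf Hg eqxx. Qed.
End TypeInference.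
Arguments infer_comp {k f g a b c p q}.

Ltac infer_cases :=
  rewrite /=; repeat match goal with
  | |- context [infer ?f] => is_var f;
      let Hf := fresh "Hf" in case Hf: (infer f) => [[[? ?] ?]|] //=
  end.

Ltac infer_eval := repeat progress (rewrite /= ?eqxx;
  try match goal with H : infer _ = _ |- _ => rewrite H end).

Section Meq.
Context {k : fieldType}.
Implicit Types f g h : term k.

(* [meq f g] identifies [f] and [g] in H^t at their common inferred type.  It
   relates any two untypable terms, so each rewrite rule below carries the
   hypothesis that its left-hand side is typable. *)
Definition meq f g : Prop :=
  infer f = infer g /\ forall a b p, infer f = Some (a, b, p) -> heq a b p f g.

Lemma meq_refl f : meq f f.
Proof. by split=> // a b p /infer_sound/heq_refl. Qed.

Lemma meq_sym f g : meq f g -> meq g f.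
Proof. by case=> fg Hfg; split=> // a b p; rewrite -fg => /Hfg/heq_sym. Qed.

Lemma meq_trans f g h : meq f g -> meq g h -> meq f h.
Proof.
case=> fg Hfg [gh Hgh]; split=> [|a b p Hf]; first by rewrite fg.
by apply: heq_trans (Hfg _ _ _ Hf) (Hgh _ _ _ _); rewrite -fg.
Qed.

Lemma meq_heq f g a b p : meq f g -> infer f = Some (a, b, p) -> heq a b p f g.
Proof. by case=> _ H /H. Qed.

Lemma meq_comp f f' g g' : meq f f' -> meq g g' -> meq (tComp f g) (tComp f' g').
Proof.
case=> ff' Hff' [gg' Hgg']; split; first by rewrite /= ff' gg'.
infer_cases; case: eqP => // ?; subst=> a b p [<- <- <-].
by apply: heq_comp; [apply: Hff' | apply: Hgg']; eassumption.
Qed.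

Lemma meq_tens f f' g g' : meq f f' -> meq g g' -> meq (tTens f g) (tTens f' g').
Proof.
case=> ff' Hff' [gg' Hgg']; split; first by rewrite /= ff' gg'.
infer_cases=> a b p [<- <- <-].
by apply: heq_tens; [apply: Hff' | apply: Hgg']; eassumption.
Qed.

Lemma meq_add f f' g g' : meq f f' -> meq g g' -> meq (tAdd f g) (tAdd f' g').
Proof.
case=> ff' Hff' [gg' Hgg']; split; first by rewrite /= ff' gg'.
infer_cases; do 3 (case: eqP => //= ?; subst); move=> a b p [<- <- <-].
by apply: heq_add; [apply: Hff' | apply: Hgg']; eassumption.
Qed.

Lemma meq_scale c f f' : meq f f' -> meq (tScale c f) (tScale c f').
Proof.
case=> ff' Hff'; split=> [|a b p Hf]; first by [].
exact: heq_scale (Hff' _ _ _ Hf).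
Qed.
End Meq.

Add Parametric Relation (k : fieldType) : (term k) (@meq k)
  reflexivity proved by (@meq_refl k) symmetry proved by (@meq_sym k)
  transitivity proved by (@meq_trans k) as meq_rel.
Add Parametric Morphism (k : fieldType) : (@tComp k)
  with signature @meq k ==> @meq k ==> @meq k as tComp_mor.
Proof. by move=> ? ? H ? ? H'; apply: meq_comp. Qed.
Add Parametric Morphism (k : fieldType) : (@tTens k)
  with signature @meq k ==> @meq k ==> @meq k as tTens_mor.
Proof. by move=> ? ? H ? ? H'; apply: meq_tens. Qed.
Add Parametric Morphism (k : fieldType) : (@tAdd k)
  with signature @meq k ==> @meq k ==> @meq k as tAdd_mor.
Proof. by move=> ? ? H ? ? H'; apply: meq_add. Qed.
Add Parametric Morphism (k : fieldType) c : (@tScale k c)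
  with signature @meq k ==> @meq k as tScale_mor.
Proof. exact: meq_scale. Qed.

Section Rules.
Context {k : fieldType}.
Implicit Types f g h : term k.

Definition typable f := if infer f is Some _ then true else false.
Definition parity f := if infer f is Some (_, _, p) then p else false.

Ltac lift_axiom ax :=
  rewrite /typable /parity; infer_cases; repeat (case: eqP => //= ?; subst);
  move=> *; split=> [|? ? ?]; infer_eval;
  [ by rewrite ?addbA ?addbF ?catA ?cats0
  | case=> <- <- <-; rewrite ?cats0 ?addbF -?addbA; apply: ax; apply: infer_sound; eassumption ].

Lemma meq_idl b f : typable (tComp (tId b) f) -> meq (tComp (tId b) f) f.
Proof. lift_axiom heq_idl. Qed.
Lemma meq_idr a f : typable (tComp f (tId a)) -> meq (tComp f (tId a)) f.
Proof. lift_axiom heq_idr. Qed.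
Lemma meq_compA f g h : typable (tComp f (tComp g h)) ->
  meq (tComp f (tComp g h)) (tComp (tComp f g) h).
Proof. lift_axiom heq_compA. Qed.
Lemma meq_tensA f g h : typable (tTens (tTens f g) h) ->
  meq (tTens (tTens f g) h) (tTens f (tTens g h)).
Proof. lift_axiom heq_tensA. Qed.
Lemma meq_unitl f : typable f -> meq (tTens (tId [::]) f) f.
Proof. lift_axiom heq_unitl. Qed.
Lemma meq_unitr f : typable f -> meq (tTens f (tId [::])) f.
Proof. lift_axiom heq_unitr. Qed.
Lemma meq_compDl f f' g : typable (tComp (tAdd f f') g) ->
  meq (tComp (tAdd f f') g) (tAdd (tComp f g) (tComp f' g)).
Proof. lift_axiom heq_compDl. Qed.
Lemma meq_compDr f g g' : typable (tComp f (tAdd g g')) ->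
  meq (tComp f (tAdd g g')) (tAdd (tComp f g) (tComp f g')).
Proof. lift_axiom heq_compDr. Qed.
Lemma meq_compZr c f g : typable (tComp f g) ->
  meq (tComp f (tScale c g)) (tScale c (tComp f g)).
Proof. lift_axiom heq_compZr. Qed.
Lemma meq_tensDl f f' g : typable (tTens (tAdd f f') g) ->
  meq (tTens (tAdd f f') g) (tAdd (tTens f g) (tTens f' g)).
Proof. lift_axiom heq_tensDl. Qed.
Lemma meq_tensDr f g g' : typable (tTens f (tAdd g g')) ->
  meq (tTens f (tAdd g g')) (tAdd (tTens f g) (tTens f g')).
Proof. lift_axiom heq_tensDr. Qed.
Lemma meq_tensZl c f g : typable (tTens f g) ->
  meq (tTens (tScale c f) g) (tScale c (tTens f g)).
Proof. lift_axiom heq_tensZl. Qed.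
Lemma meq_tensZr c f g : typable (tTens f g) ->
  meq (tTens f (tScale c g)) (tScale c (tTens f g)).
Proof. lift_axiom heq_tensZr. Qed.
Lemma meq_addA f g h : typable (tAdd f (tAdd g h)) ->
  meq (tAdd f (tAdd g h)) (tAdd (tAdd f g) h).
Proof. lift_axiom heq_addA. Qed.
Lemma meq_addC f g : typable (tAdd f g) -> meq (tAdd f g) (tAdd g f).
Proof. lift_axiom heq_addC. Qed.
Lemma meq_scale1 f : typable f -> meq (tScale 1 f) f.
Proof. lift_axiom heq_scale1. Qed.

Lemma meq_tens_id (a b : obj) : meq (tTens (tId a) (tId b) : term k) (tId (a ++ b)).
Proof. by split=> // ? ? ? [<- <- <-]; apply: heq_tens_id. Qed.

Lemma typable_tens f g : typable f -> typable g -> typable (tTens f g).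
Proof.
by rewrite /typable /=; case: (infer f) => [[[? ?] ?]|] //; case: (infer g) => [[[? ?] ?]|].
Qed.

Lemma meq_superinterchange f f' h h' : typable (tComp f h) -> typable (tComp f' h') ->
  meq (tComp (tTens f f') (tTens h h'))
      (tScale ((-1) ^+ (parity f' && parity h)) (tTens (tComp f h) (tComp f' h'))).
Proof.
rewrite /typable /parity; infer_cases; do 2 (case: eqP => //= ? _); subst.
split=> [|? ? ?]; infer_eval; first by rewrite addbACA.
by case=> <- <- <-; apply: heq_interchange; apply: infer_sound; eassumption.
Qed.

Lemma meq_interchange f f' h h' :
  typable (tComp f h) -> typable (tComp f' h') -> ~~ (parity f' && parity h) ->
  meq (tComp (tTens f f') (tTens h h')) (tTens (tComp f h) (tComp f' h')).
Proof.
move=> Hfh Hfh' /negbTE even.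
rewrite meq_superinterchange // even expr0 meq_scale1 //; last exact: typable_tens.
reflexivity.
Qed.

Lemma heq_addNr a b p g : htyped a b p g -> heq a b p (tAdd (tScale (-1) g) g) (tZero a b).
Proof.
move=> Tg; apply: heq_trans (heq_add (heq_refl (ty_scale (-1) Tg)) (heq_sym (heq_scale1 Tg))) _.
by apply: heq_trans (heq_sym (heq_scaleDl (-1) 1 Tg)) _; rewrite addNr; apply: heq_scale0.
Qed.

Arguments heq_addNr {a b p g}.

Lemma meq_add_cancel f g : typable (tAdd f g) -> meq (tAdd f (tAdd (tScale (-1) g) g)) f.
Proof.
rewrite /typable; infer_cases; do 3 (case: eqP => //= ?); subst=> _.
split=> [|? ? ?]; infer_eval => //; case=> <- <- <-.
apply: heq_trans (heq_add (heq_refl _) (heq_addNr _)) (heq_add0 _);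
  apply: infer_sound; eassumption.
Qed.
End Rules.

#[local] Hint Resolve meq_refl : core.

Notation iP := (tId [:: true]).
Notation iQ := (tId [:: false]).
Notation iPP := (tId [:: true; true]).
Notation iQP := (tId [:: false; true]).
Notation iPQ := (tId [:: true; false]).

Section Relations.
Context {k : fieldType}.

Lemma meq_of_heq a b p (f g : term k) :
  infer f = Some (a, b, p) -> infer g = Some (a, b, p) -> heq a b p f g -> meq f g.
Proof. by move=> Hf Hg H; split=> [|? ? ?]; rewrite ?Hf ?Hg // => -[<- <- <-]. Qed.

Lemma meq_zz2 : meq (tComp (tTens iP tEps) (tTens tEta' iP) : term k) iP.
Proof. exact: meq_of_heq (@heq_zz2 k). Qed.
Lemma meq_zz3 : meq (tComp (tTens tEps' iP) (tTens iP tEta) : term k) iP.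
Proof. exact: meq_of_heq (@heq_zz3 k). Qed.
Lemma meq_s2 : meq (tComp tS tS : term k) iPP.
Proof. exact: meq_of_heq (@heq_s2 k). Qed.
Lemma meq_braid : meq (tComp (tComp (tTens tS iP) (tTens iP tS)) (tTens tS iP) : term k)
                      (tComp (tComp (tTens iP tS) (tTens tS iP)) (tTens iP tS)).
Proof. exact: meq_of_heq (@heq_braid k). Qed.
Lemma meq_sigma2 : meq (tComp sigma' sigma : term k)
    (tAdd (tAdd iQP (tScale (-1) (tComp tEta tEps)))
          (tScale (-1) (tComp (tComp (tTens tCQ iP) (tComp tEta tEps)) (tTens iQ tCP)))).
Proof. exact: meq_of_heq (@heq_sigma2 k). Qed.
Lemma meq_sdot1 : meq (tComp tS (tTens tCP iP) : term k) (tComp (tTens iP tCP) tS).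
Proof. exact: meq_of_heq (@heq_sdot1 k). Qed.
Lemma meq_sdot2 : meq (tComp (tTens tCP iP) tS : term k) (tComp tS (tTens iP tCP)).
Proof. exact: meq_of_heq (@heq_sdot2 k). Qed.
Lemma meq_dotcap' : meq (tComp tEps' (tTens tCP iQ) : term k) (tComp tEps' (tTens iP tCQ)).
Proof. exact: meq_of_heq (@heq_dotcap' k). Qed.
Lemma meq_dotcup' :
  meq (tComp (tTens tCP iQ) tEta' : term k) (tScale (-1) (tComp (tTens iP tCQ) tEta')).
Proof. exact: meq_of_heq (@heq_dotcup' k). Qed.
End Relations.

Ltac typable_eval := rewrite /typable /parity; infer_eval; rewrite ?andbF ?andFb ?addbF //.

Section Monoidal.
Context {k : fieldType}.
Implicit Types f g h : term k.

Lemma meq_compAr f g h : typable (tComp (tComp f g) h) ->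
  meq (tComp (tComp f g) h) (tComp f (tComp g h)).
Proof.
move=> H; symmetry; apply: meq_compA; move: H; rewrite /typable /=.
case: (infer f) => [[[? ?] ?]|] //; case: (infer g) => [[[? ?] ?]|] //.
by case: (infer h) => [[[? ?] ?]|] //; repeat (case: eqP => //= ?; subst).
Qed.

Lemma meq_id_catl a b f : typable (tTens (tId (a ++ b)) f) ->
  meq (tTens (tId (a ++ b)) f) (tTens (tId a) (tTens (tId b) f)).
Proof. by move=> ?; rewrite -meq_tens_id meq_tensA. Qed.

Lemma meq_id_catr a b f : typable (tTens f (tId (a ++ b))) ->
  meq (tTens f (tId (a ++ b))) (tTens (tTens f (tId a)) (tId b)).
Proof.
move=> H; rewrite -meq_tens_id -meq_tensA //; move: H; rewrite /typable /=.
by case: (infer f) => [[[? ?] ?]|].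
Qed.

Lemma meq_tens_comp_idr f g x : typable (tComp f g) ->
  meq (tTens (tComp f g) (tId x)) (tComp (tTens f (tId x)) (tTens g (tId x))).
Proof.
rewrite /typable; infer_cases; case: eqP => //= ? _; subst.
by symmetry; rewrite meq_interchange ?meq_idl //; typable_eval.
Qed.

Lemma meq_tens_comp_idl f g x : typable (tComp f g) ->
  meq (tTens (tId x) (tComp f g)) (tComp (tTens (tId x) f) (tTens (tId x) g)).
Proof.
rewrite /typable; infer_cases; case: eqP => //= ? _; subst.
by symmetry; rewrite meq_interchange ?meq_idl //; typable_eval.
Qed.

Lemma meq_tens_lower_l f g b c :
  typable (tComp (tId b) f) -> typable (tComp g (tId c)) -> ~~ (parity g && parity f) ->
  meq (tTens f g) (tComp (tTens (tId b) g) (tTens f (tId c))).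
Proof.
rewrite /typable; infer_cases; do 2 (case: eqP => //= ? _); subst=> ?.
by symmetry; rewrite meq_interchange ?meq_idl ?meq_idr //; typable_eval.
Qed.

Lemma meq_tens_lower_r f g a d :
  typable (tComp f (tId a)) -> typable (tComp (tId d) g) ->
  meq (tTens f g) (tComp (tTens f (tId d)) (tTens (tId a) g)).
Proof.
rewrite /typable; infer_cases; do 2 (case: eqP => //= ? _); subst.
by symmetry; rewrite meq_interchange ?meq_idl ?meq_idr //; typable_eval.
Qed.

Lemma meq_tens_slide f g a b c d :
  typable (tComp (tId b) f) -> typable (tComp f (tId a)) ->
  typable (tComp (tId d) g) -> typable (tComp g (tId c)) -> ~~ (parity g && parity f) ->
  meq (tComp (tTens f (tId d)) (tTens (tId a) g)) (tComp (tTens (tId b) g) (tTens f (tId c))).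
Proof.
by move=> *; rewrite -meq_tens_lower_r // meq_tens_lower_l.
Qed.
End Monoidal.

(** * The curl in End(P) and End(PP) *)

(* [curl], [sig] and [sig'] are [Xcurl], [sigma] and [sigma'] unfolded, so
   that rewriting can reach their components. *)
Notation curl := (tComp (tComp (tTens iP tEps') (tTens tS iQ)) (tTens iP tEta')).
Notation sig := (tComp (tComp (tTens tEps iPQ) (tTens (tTens iQ tS) iQ)) (tTens iQP tEta')).
Notation sig' := (tComp (tComp (tTens iQP tEps') (tTens (tTens iQ tS) iQ)) (tTens tEta iPQ)).
Notation mid_cap' := (tTens (tTens iP tEps') iP).
Notation mid_cup' := (tTens (tTens iP tEta') iP).
Notation sandwich M :=
  (tComp (tComp mid_cap' (tTens tS iQP)) (tComp (tTens iPP M) mid_cup')).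
Notation s12Q := (tTens (tTens tS iP) iQ).
Notation s23Q := (tTens (tTens iP tS) iQ).
Notation cQ_l := (tTens tCQ iP).
Notation cP_r := (tTens iQ tCP).
Notation dotted_cupcap := (tComp (tComp cQ_l (tComp tEta tEps)) cP_r).
Notation dotted_curl :=
  (tComp (tTens iP tEps') (tComp (tTens tS iQ) (tTens iP (tComp (tTens iP tCQ) tEta')))).

Section Curl.
Variable k : fieldType.
Local Notation "f ≡ g" := (@meq k f g) (at level 70, no associativity).

Lemma sandwich_id : tTens curl iP ≡ sandwich iQP.
Proof.
by rewrite !meq_tens_comp_idr // (meq_tensA tS iQ iP) // !meq_tens_id meq_idl.
Qed.

Lemma sandwich_meq M N : M ≡ N -> sandwich M ≡ sandwich N.
Proof. by move=> MN; rewrite MN. Qed.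

Lemma zz2_mid : tComp (tTens iPP tEps) mid_cup' ≡ iPP.
Proof.
rewrite (meq_id_catl [:: true] [:: true] tEps) // (meq_tensA iP tEta' iP) // meq_interchange //.
by rewrite meq_idl // meq_zz2 meq_tens_id.
Qed.

Lemma zz3_mid : tComp mid_cap' (tTens iPP tEta) ≡ iPP.
Proof.
rewrite (meq_id_catl [:: true] [:: true] tEta) // (meq_tensA iP tEps' iP) // meq_interchange //.
by rewrite meq_idl // meq_zz3 meq_tens_id.
Qed.

Lemma sandwich_cupcap : sandwich (tComp tEta tEps) ≡ tS.
Proof.
rewrite meq_tens_comp_idl // (meq_compAr (tTens iPP tEta)) // zz2_mid meq_idr // meq_compAr //.
have -> : tComp (tTens tS iQP) (tTens iPP tEta) ≡ tTens tS tEta.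
  by rewrite meq_interchange // meq_idl // meq_idr.
rewrite (meq_tens_lower_l tS tEta [:: true; true] [::]) // meq_compA //.
by rewrite zz3_mid meq_idl // meq_unitr.
Qed.

Lemma zz2_mid_dot : tComp (tTens iPP tEps) (tComp (tTens iPP cP_r) mid_cup') ≡ tTens iP tCP.
Proof.
rewrite meq_compA // meq_interchange // meq_idl //.
rewrite (meq_id_catl [:: true] [:: true]) // (meq_tensA iP tEta' iP) //.
rewrite meq_interchange // meq_idl //.
rewrite (meq_tens_comp_idl tEps cP_r [:: true]) // meq_compAr // -(meq_tensA iP iQ tCP) //.
rewrite meq_tens_id meq_interchange // meq_idl // meq_idr //.
by rewrite (meq_tens_lower_r tEta' tCP [::] [:: true]) // meq_compA // meq_zz2 meq_idl // meq_unitl.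
Qed.

Lemma mid_cap'_dotQ : tComp mid_cap' (tTens iPP cQ_l) ≡ tComp mid_cap' (tTens (tTens iP tCP) iQP).
Proof.
rewrite (meq_tensA iP tEps' iP) // (meq_id_catl [:: true] [:: true]) //.
rewrite meq_interchange // meq_idl //.
rewrite -(meq_tensA iP tCQ iP) // meq_interchange // meq_idl // -meq_dotcap'.
rewrite (meq_tensA iP tCP iQP) // meq_interchange // meq_idl //.
by rewrite (meq_id_catr [:: false] [:: true] tCP) // meq_interchange // meq_idl.
Qed.

Lemma sandwich_dotted_cupcap :
  sandwich dotted_cupcap ≡ tComp tS (tComp (tTens tCP iP) (tTens iP tCP)).
Proof.
rewrite (meq_tens_comp_idl (tComp cQ_l (tComp tEta tEps)) cP_r [:: true; true]) //.
rewrite (meq_tens_comp_idl cQ_l (tComp tEta tEps) [:: true; true]) //.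
rewrite (meq_tens_comp_idl tEta tEps [:: true; true]) // !meq_compAr // zz2_mid_dot.
rewrite (meq_compA (tTens tS iQP)) //.
rewrite (meq_tens_slide tS cQ_l [:: true; true] [:: true; true]
                        [:: false; true] [:: false; true]) //.
rewrite meq_compAr // (meq_compA (tTens tS iQP)) //.
rewrite (meq_tens_slide tS tEta [:: true; true] [:: true; true] [::] [:: false; true]) //.
rewrite meq_compAr // (meq_compA mid_cap') // mid_cap'_dotQ meq_compAr //.
rewrite (meq_compA (tTens (tTens iP tCP) iQP)) //.
rewrite (meq_tens_slide (tTens iP tCP) tEta [:: true; true] [:: true; true]
                        [::] [:: false; true]) //.
rewrite meq_compAr // !meq_unitr // (meq_compA (tTens iP tCP) tS) // -meq_sdot1 meq_compAr //.
by rewrite (meq_compA mid_cap') // zz3_mid meq_idl.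
Qed.

Lemma sigma_cup' : tComp (tTens iP sig) (tTens tEta' iP) ≡ tComp (tTens tS iQ) (tTens iP tEta').
Proof.
rewrite (meq_tens_comp_idl (tComp (tTens tEps iPQ) (tTens (tTens iQ tS) iQ))) //.
rewrite (meq_tens_comp_idl (tTens tEps iPQ)) // !meq_compAr // -(meq_tensA iP tEps iPQ) //.
rewrite (meq_tensA iQ tS iQ) // -(meq_tensA iP iQ (tTens tS iQ)) // meq_tens_id.
rewrite -(meq_tensA iP iQP tEta') // meq_tens_id /=.
rewrite (meq_id_catl [:: true; false] [:: true] tEta') //.
rewrite -(meq_tens_slide tEta' (tTens iP tEta') [::] [:: true; false]
                         [:: true] [:: true; true; false]) //.
rewrite meq_unitl // (meq_compA (tTens iPQ (tTens tS iQ))) //.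
rewrite -(meq_tens_slide tEta' (tTens tS iQ) [::] [:: true; false]
                         [:: true; true; false] [:: true; true; false]) //.
rewrite meq_unitl // meq_compAr // meq_compA // (meq_id_catr [:: true] [:: true; false] tEta') //.
by rewrite meq_interchange // meq_zz2 meq_idl // meq_tens_id meq_idl.
Qed.

Lemma sigma'_cap' : tComp (tTens tEps' iP) (tTens iP sig') ≡ tComp (tTens iP tEps') (tTens tS iQ).
Proof.
rewrite (meq_tens_comp_idl (tComp (tTens iQP tEps') (tTens (tTens iQ tS) iQ))) //.
rewrite (meq_tens_comp_idl (tTens iQP tEps')) // !meq_compAr //.
rewrite -(meq_tensA iP iQP tEps') // meq_tens_id /=.
rewrite (meq_id_catl [:: true; false] [:: true] tEps') // (meq_compA (tTens tEps' iP)) //.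
rewrite (meq_tens_slide tEps' (tTens iP tEps') [:: true; false] [::]
                        [:: true; true; false] [:: true]) //.
rewrite meq_unitl // meq_compAr //.
rewrite (meq_tensA iQ tS iQ) // -(meq_tensA iP iQ (tTens tS iQ)) // meq_tens_id /=.
rewrite (meq_compA (tTens tEps' (tId [:: true; true; false]))) //.
rewrite (meq_tens_slide tEps' (tTens tS iQ) [:: true; false] [::]
                        [:: true; true; false] [:: true; true; false]) //.
rewrite meq_unitl // meq_compAr // -(meq_tensA iP tEta iPQ) //.
rewrite (meq_id_catr [:: true] [:: true; false] tEps') //.
by rewrite meq_interchange // meq_zz3 meq_idl // meq_tens_id meq_idr.
Qed.

Lemma sigma_mid_cup' :
  tComp (tTens iPP sig) mid_cup' ≡ tComp s23Q (tTens iPP tEta').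
Proof.
rewrite (meq_id_catl [:: true] [:: true] sig) // (meq_tensA iP tEta' iP) //.
rewrite meq_interchange // meq_idl // sigma_cup' meq_tens_comp_idl //.
by rewrite -(meq_tensA iP tS iQ) // -(meq_tensA iP iP tEta') // meq_tens_id.
Qed.

Lemma sigma'_mid_cap' :
  tComp mid_cap' (tTens iPP sig') ≡ tComp (tTens iPP tEps') s23Q.
Proof.
rewrite (meq_tensA iP tEps' iP) // (meq_id_catl [:: true] [:: true] sig') //.
rewrite meq_interchange // meq_idl // sigma'_cap' meq_tens_comp_idl //.
by rewrite -(meq_tensA iP iP tEps') // meq_tens_id -(meq_tensA iP tS iQ).
Qed.

Lemma crossing_cap' : tComp tS (tTens iPP tEps') ≡ tComp (tTens iPP tEps') s12Q.
Proof.
symmetry; rewrite -(meq_id_catr [:: true] [:: false] tS) //=.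
rewrite -(meq_tens_slide tS tEps' [:: true; true] [:: true; true] [:: true; false] [::]) //.
by rewrite meq_unitr.
Qed.

Lemma crossing_cup' : tComp s12Q (tTens iPP tEta') ≡ tComp (tTens iPP tEta') tS.
Proof.
rewrite -(meq_id_catr [:: true] [:: false] tS) //=.
rewrite (meq_tens_slide tS tEta' [:: true; true] [:: true; true] [::] [:: true; false]) //.
by rewrite meq_unitr.
Qed.

Lemma sandwich_sigma : sandwich (tComp sigma' sigma) ≡ tComp tS (tComp (tTens iP curl) tS).
Proof.
rewrite /sigma /sigma' /idQ (meq_tens_comp_idl sig' sig [:: true; true]) //.
rewrite (meq_compAr mid_cap') // (meq_compAr (tTens iPP sig')) // sigma_mid_cup'.
rewrite (meq_compA (tTens tS iQP)) //.
rewrite (meq_tens_slide tS sig' [:: true; true] [:: true; true]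
                        [:: true; false] [:: false; true]) //.
rewrite meq_compAr // (meq_compA mid_cap') // sigma'_mid_cap' meq_compAr //.
rewrite (meq_id_catr [:: true] [:: false] tS) //.
rewrite (meq_compA s23Q s12Q) // (meq_compA (tComp s23Q s12Q) s23Q) //.
rewrite -(meq_tens_comp_idr (tTens iP tS) (tTens tS iP) [:: false]) //.
rewrite -(meq_tens_comp_idr (tComp (tTens iP tS) (tTens tS iP)) (tTens iP tS) [:: false]) //.
rewrite -meq_braid !meq_tens_comp_idr // !meq_compAr //.
rewrite (meq_tens_comp_idl (tTens iP tEps')) // (meq_tens_comp_idl (tTens tS iQ)) //.
rewrite -(meq_tensA iP iP tEps') // -(meq_tensA iP tS iQ) // -(meq_tensA iP iP tEta') //.
rewrite !meq_tens_id /= !meq_compAr // (meq_compA tS) // crossing_cap'.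
by rewrite meq_compAr // -crossing_cup'.
Qed.

Lemma idQP_decomp : iQP ≡ tAdd (tAdd (tComp sigma' sigma) (tComp tEta tEps)) dotted_cupcap.
Proof.
rewrite meq_sigma2.
set e := tComp tEta tEps; set me := tScale (-1) e; set mD := tScale (-1) dotted_cupcap.
rewrite -(meq_addA (tAdd iQP me) mD e) // (meq_addC mD e) // (meq_addA (tAdd iQP me) e mD) //.
rewrite -(meq_addA iQP me e) // meq_add_cancel //.
by rewrite -(meq_addA iQP mD dotted_cupcap) // meq_add_cancel.
Qed.

Lemma curl_tens_idP : tTens curl iP ≡
  tAdd (tAdd (tComp tS (tComp (tTens iP curl) tS)) tS)
       (tComp tS (tComp (tTens tCP iP) (tTens iP tCP))).
Proof.
rewrite sandwich_id (sandwich_meq _ _ idQP_decomp) !meq_tensDr // !meq_compDl // !meq_compDr //.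
by rewrite sandwich_sigma sandwich_cupcap sandwich_dotted_cupcap.
Qed.

Lemma crossing_curl : tComp tS (tTens curl iP) ≡
  tAdd (tAdd (tComp (tTens iP curl) tS) iPP) (tComp (tTens tCP iP) (tTens iP tCP)).
Proof.
rewrite curl_tens_idP !meq_compDr // !(meq_compA tS tS) // !meq_s2.
by rewrite !(meq_idl [:: true; true]).
Qed.

Lemma dots_anticommute :
  tComp (tTens iP tCP) (tTens tCP iP) ≡ tScale (-1) (tComp (tTens tCP iP) (tTens iP tCP)).
Proof.
rewrite (meq_superinterchange iP tCP tCP iP) // (meq_interchange tCP iP iP tCP) //.
by rewrite !(meq_idl [:: true] tCP) // !(meq_idr [:: true] tCP).
Qed.

Lemma curl_crossing : tComp (tTens curl iP) tS ≡
  tAdd (tAdd (tComp tS (tTens iP curl)) iPP) (tScale (-1) (tComp (tTens tCP iP) (tTens iP tCP))).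
Proof.
rewrite curl_tens_idP !meq_compDl // !meq_compAr // !meq_s2 meq_idr //.
rewrite -meq_sdot1 (meq_compA (tTens tCP iP) tS) // meq_sdot2 meq_compAr //.
by rewrite (meq_compA tS tS) // meq_s2 meq_idl // dots_anticommute.
Qed.

Lemma dot_curl_above : tComp tCP curl ≡ tScale (-1) dotted_curl.
Proof.
have dot_cap' : tComp tCP (tTens iP tEps') ≡ tComp (tTens iP tEps') (tTens tCP iPQ).
  rewrite -(meq_tens_lower_l tCP tEps' [:: true] [:: true; false]) //.
  by rewrite (meq_tens_lower_r tCP tEps' [:: true] [::]) // meq_unitr.
have dot_crossing :
    tComp (tTens tCP iPQ) (tTens tS iQ) ≡ tComp (tTens tS iQ) (tTens (tTens iP tCP) iQ).
  rewrite (meq_id_catr [:: true] [:: false] tCP) // !meq_interchange //.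
  by rewrite !(meq_idl [:: false]) // meq_sdot2.
have dot_cup' : tComp (tTens (tTens iP tCP) iQ) (tTens iP tEta') ≡
                tScale (-1) (tTens iP (tComp (tTens iP tCQ) tEta')).
  by rewrite (meq_tensA iP tCP iQ) // meq_interchange // meq_idl // meq_dotcup' meq_tensZr.
rewrite !meq_compAr // (meq_compA tCP) // dot_cap' meq_compAr // (meq_compA (tTens tCP iPQ)) //.
by rewrite dot_crossing meq_compAr // dot_cup' !meq_compZr.
Qed.

Lemma dot_curl_below : tComp curl tCP ≡ dotted_curl.
Proof.
have dot_cup' : tComp (tTens iP tEta') tCP ≡ tComp (tTens tCP iPQ) (tTens iP tEta').
  rewrite -(meq_tens_lower_r tCP tEta' [:: true] [:: true; false]) //.
  by rewrite (meq_tens_lower_l tCP tEta' [:: true] [::]) // meq_unitr.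
have dot_crossing :
    tComp (tTens tS iQ) (tTens tCP iPQ) ≡ tComp (tTens (tTens iP tCP) iQ) (tTens tS iQ).
  rewrite (meq_id_catr [:: true] [:: false] tCP) // !meq_interchange //.
  by rewrite !(meq_idl [:: false]) // meq_sdot1.
have dot_cap' :
    tComp (tTens iP tEps') (tTens (tTens iP tCP) iQ) ≡ tComp (tTens iP tEps') (tTens iPP tCQ).
  rewrite (meq_tensA iP tCP iQ) // meq_interchange // meq_idl // meq_dotcap'.
  by rewrite (meq_id_catl [:: true] [:: true] tCQ) // meq_interchange // meq_idl.
have dotQ_cup' : tComp (tTens iPP tCQ) (tTens iP tEta') ≡ tTens iP (tComp (tTens iP tCQ) tEta').
  by rewrite (meq_id_catl [:: true] [:: true] tCQ) // meq_interchange // meq_idl.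
rewrite !meq_compAr // dot_cup' (meq_compA (tTens tS iQ)) // dot_crossing meq_compAr //.
rewrite (meq_compA (tTens iP tEps')) // dot_cap' meq_compAr // (meq_compA (tTens iPP tCQ)) //.
rewrite -(meq_tens_slide tS tCQ [:: true; true] [:: true; true] [:: false] [:: false]) //.
by rewrite meq_compAr // dotQ_cup'.
Qed.

Lemma dot_curl : tComp tCP curl ≡ tScale (-1) (tComp curl tCP).
Proof. by rewrite dot_curl_above dot_curl_below. Qed.
End Curl.

(** * Strands of P^n *)

Notation whisker A B f := (tTens (tTens (tId A) f) (tId B)).

Section Whisker.
Context {k : fieldType}.
Implicit Types f g : term k.

Lemma meq_whisker_comp A B f g : typable (tComp f g) ->
  meq (tComp (whisker A B f) (whisker A B g)) (whisker A B (tComp f g)).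
Proof.
rewrite /typable; infer_cases; case: eqP => //= ? _; subst.
by rewrite !meq_interchange ?meq_idl //; typable_eval.
Qed.

Lemma meq_whisker_add A B f g : typable (tAdd f g) ->
  meq (whisker A B (tAdd f g)) (tAdd (whisker A B f) (whisker A B g)).
Proof.
rewrite /typable; infer_cases; do 3 (case: eqP => //= ?); subst=> _.
by rewrite meq_tensDr ?meq_tensDl //; typable_eval.
Qed.

Lemma meq_whisker_scale A B c f : typable f ->
  meq (whisker A B (tScale c f)) (tScale c (whisker A B f)).
Proof.
rewrite /typable; infer_cases=> _.
by rewrite meq_tensZr ?meq_tensZl //; typable_eval.
Qed.

Lemma meq_whisker_id A B a : meq (whisker A B (tId a) : term k) (tId ((A ++ a) ++ B)).
Proof. by rewrite !meq_tens_id. Qed.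

Lemma meq_whisker_consr A B f : typable f ->
  meq (whisker A (true :: B) f) (whisker A B (tTens f (tId [:: true]))).
Proof.
rewrite /typable; infer_cases=> _.
by rewrite (meq_id_catr [:: true] B) ?(meq_tensA (tId A)) //; typable_eval.
Qed.

Lemma meq_whisker_rconsl A B f : typable f ->
  meq (whisker (A ++ [:: true]) B f) (whisker A B (tTens (tId [:: true]) f)).
Proof.
rewrite /typable; infer_cases=> _.
by rewrite (meq_id_catl A [:: true]) //; typable_eval.
Qed.
End Whisker.

Notation strand n i f := (whisker (nseq i.-1 true) (nseq (n - i) true) f).

Section Strands.
Context {k : fieldType}.
Implicit Types F G : term k.
Local Notation "f ≡ g" := (@meq k f g) (at level 70, no associativity).

Lemma Pn_strand n m : (0 < m <= n)%N ->
  (nseq m.-1 true ++ [:: true]) ++ nseq (n - m) true = Pn n.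
Proof.
by case/andP=> m_gt0 m_le_n; rewrite -[[:: true]]/(nseq 1 true) -!nseqD /Pn; congr nseq; lia.
Qed.

Lemma infer_whisker A B F a b p : infer F = Some (a, b, p) ->
  infer (whisker A B F) = Some ((A ++ a) ++ B, (A ++ b) ++ B, p).
Proof. by move=> HF; rewrite /= HF addbF. Qed.

Lemma infer_strand n m F p : (0 < m <= n)%N -> infer F = Some ([:: true], [:: true], p) ->
  infer (strand n m F) = Some (Pn n, Pn n, p).
Proof. by move=> Hm /(infer_whisker (nseq m.-1 true) (nseq (n - m) true)); rewrite Pn_strand. Qed.

Lemma infer_Xi n m : (0 < m <= n)%N -> infer (Xi n m : term k) = Some (Pn n, Pn n, false).
Proof. by move=> Hm; apply: infer_strand. Qed.

Lemma infer_Ci n m : (0 < m <= n)%N -> infer (Ci n m : term k) = Some (Pn n, Pn n, true).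
Proof. by move=> Hm; apply: infer_strand. Qed.

Lemma infer_Ti n i : (0 < i < n)%N -> infer (Ti n i : term k) = Some (Pn n, Pn n, false).
Proof.
case/andP=> i_gt0 i_lt_n.
have -> : Pn n = (nseq i.-1 true ++ [:: true; true]) ++ nseq (n - i.+1) true.
  by rewrite -[[:: true; true]]/(nseq 2 true) -!nseqD /Pn; congr nseq; lia.
exact: infer_whisker.
Qed.

Lemma Ti_Xi n i : (0 < i < n)%N ->
  tComp (Ti n i) (Xi n i) ≡
    tAdd (tAdd (tComp (Xi n i.+1) (Ti n i)) (tId (Pn n))) (tComp (Ci n i) (Ci n i.+1)) /\
  tComp (Xi n i) (Ti n i) ≡
    tAdd (tAdd (tComp (Ti n i) (Xi n i.+1)) (tId (Pn n)))
         (tScale (-1) (tComp (Ci n i) (Ci n i.+1))).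
Proof.
case/andP=> i_gt0 i_lt_n.
set A := nseq i.-1 true; set B := nseq (n - i.+1) true.
have eB : nseq (n - i) true = true :: B by rewrite /B -subSS subSn.
have eA : nseq i true = A ++ [:: true].
  by rewrite /A -[[:: true]]/(nseq 1 true) -nseqD addn1 prednK.
have ePn : Pn n = (A ++ [:: true; true]) ++ B.
  by rewrite /A /B -[[:: true; true]]/(nseq 2 true) -!nseqD /Pn; congr nseq; lia.
rewrite /Ti /Xi /Ci eB /= eA -/A -/B ePn !meq_whisker_consr // !meq_whisker_rconsl //.
rewrite -(meq_whisker_id A B [:: true; true]) !meq_whisker_comp // -!meq_whisker_add //.
by rewrite -meq_whisker_scale // -meq_whisker_add // crossing_curl curl_crossing.
Qed.

Lemma whisker_commute n i j F G p q : (0 < i < j)%N -> (j <= n)%N ->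
  infer F = Some ([:: true], [:: true], p) -> infer G = Some ([:: true], [:: true], q) ->
  ~~ (q && p) ->
  tComp (strand n i F) (strand n j G) ≡ tComp (strand n j G) (strand n i F).
Proof.
case/andP=> i_gt0 i_lt_j j_le_n HF HG Hpar.
set A := nseq i.-1 true; set M := nseq (j - i.+1) true; set B := nseq (n - j) true.
have eL : nseq (n - i) true = (M ++ [:: true]) ++ B.
  by rewrite /M /B -[[:: true]]/(nseq 1 true) -!nseqD; congr nseq; lia.
have eR : nseq j.-1 true = (A ++ [:: true]) ++ M.
  by rewrite /M /A -[[:: true]]/(nseq 1 true) -!nseqD; congr nseq; lia.
rewrite eL eR (meq_id_catr (M ++ [:: true]) B) ?(meq_tensA (tId A) F) //; try typable_eval.
rewrite (meq_id_catl (A ++ [:: true]) M G) ?(meq_id_catl A [:: true]) //; try typable_eval.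
by rewrite !meq_whisker_comp ?meq_tens_slide //; typable_eval.
Qed.

Lemma Xi_Xi n i j : (0 < i <= n)%N -> (0 < j <= n)%N ->
  tComp (Xi n i) (Xi n j) ≡ tComp (Xi n j) (Xi n i).
Proof.
move=> /andP[i_gt0 i_le_n] /andP[j_gt0 j_le_n].
case: (ltngtP i j) => [i_lt_j | j_lt_i | <-] //.
  by apply: (whisker_commute _ _ _ _ _ false false); rewrite ?i_gt0.
by symmetry; apply: (whisker_commute _ _ _ _ _ false false); rewrite ?j_gt0.
Qed.

Lemma Ci_Xi n i j : (0 < i <= n)%N -> (0 < j <= n)%N ->
  tComp (Ci n i) (Xi n j) ≡ tScale ((-1) ^+ (i == j)) (tComp (Xi n j) (Ci n i)).
Proof.
move=> Hi Hj; have XC : typable (tComp (Xi n j) (Ci n i) : term k).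
  by rewrite /typable (infer_comp (infer_Xi _ _ Hj) (infer_Ci _ _ Hi)).
case/andP: Hi Hj => i_gt0 i_le_n /andP[j_gt0 j_le_n].
case: (ltngtP i j) => [i_lt_j | j_lt_i | <-].
- rewrite expr0 meq_scale1 //.
  by apply: (whisker_commute _ _ _ _ _ true false); rewrite ?i_gt0.
- rewrite expr0 meq_scale1 //.
  by symmetry; apply: (whisker_commute _ _ _ _ _ false true); rewrite ?j_gt0.
- by rewrite /Ci /Xi !meq_whisker_comp // -meq_whisker_scale // dot_curl.
Qed.
End Strands.

Theorem proposition4 (k : fieldType) (char0 : [pchar k] =i pred0)
    (n : nat) (hn : (2 <= n)%N) :
  (forall i : nat, (1 <= i <= n.-1)%N ->
     @heq k (Pn n) (Pn n) false
         (tComp (Ti n i) (Xi n i))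
         (tAdd (tAdd (tComp (Xi n i.+1) (Ti n i)) (tId (Pn n)))
               (tComp (Ci n i) (Ci n i.+1)))
  /\ @heq k (Pn n) (Pn n) false
         (tComp (Xi n i) (Ti n i))
         (tAdd (tAdd (tComp (Ti n i) (Xi n i.+1)) (tId (Pn n)))
               (tScale (-1) (tComp (Ci n i) (Ci n i.+1)))))
  /\
  (forall i j : nat, (1 <= i <= n)%N -> (1 <= j <= n)%N ->
     @heq k (Pn n) (Pn n) true
         (tComp (Ci n i) (Xi n j))
         (tScale ((-1) ^+ (i == j)) (tComp (Xi n j) (Ci n i)))
  /\ @heq k (Pn n) (Pn n) false
         (tComp (Xi n i) (Xi n j)) (tComp (Xi n j) (Xi n i))).
Proof.
split=> [i Hi | i j Hi Hj].
  have [Hi' Hin] : (0 < i < n)%N /\ (0 < i <= n)%N by lia.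
  have [TX TT] := (infer_Xi (k := k) _ _ Hin, infer_Ti (k := k) _ _ Hi').
  case: (Ti_Xi (k := k) _ _ Hi') => TX_rel XT_rel.
  by split; apply: meq_heq; [exact: TX_rel | exact: infer_comp TT TX
                            | exact: XT_rel | exact: infer_comp TX TT].
split; apply: meq_heq.
- exact: Ci_Xi.
- exact: infer_comp (infer_Ci _ _ Hi) (infer_Xi _ _ Hj).
- exact: Xi_Xi.
- exact: infer_comp (infer_Xi _ _ Hi) (infer_Xi _ _ Hj).
Qed.
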